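(* Consider the iterates $\{x(t)\}$ of the asynchronous network Newton method described in the context, with arbitrary $x(0)\in\mathbb{R}^n$, in a network with $n\ge 2$ agents. If $$0<\varepsilon<\min\left\{1,\;2\left(\frac{\lambda}{\Lambda}\right)^2\right\},$$ then for all $t\ge0$ $$\mathbb{E}\big[F(x(t))-F^*\big]\le(1-\beta)^t\big(F(x(0))-F^*\big),\qquad \beta=\frac{\alpha m\,\varepsilon\,(2\lambda^2-\varepsilon\Lambda^2)}{n\lambda},$$ and $0<\beta<1$.
   Context: Setup. Let $n\ge 1$ be the number of agents and $\alpha>0$ a scalar. $W\in\mathbb{R}^{n\times n}$ is a symmetric nonnegative matrix with $W\mathbb{1}=\mathbb{1}$ (where $\mathbb{1}$ is the all-ones vector), $\mathrm{null}(I-W)=\mathrm{span}\{\mathbb{1}\}$, $0\le W_{ij}<1$ for all $i,j$, and $\delta\le W_{ii}\le\Delta$ for all $i$, for constants $0<\delta\le\Delta<1$. Each $f_i:\mathbb{R}\to\mathbb{R}$ is twice continuously differentiable with $0<m\le f_i''(s)\le M<\infty$ for all $s$ and $|f_i''(a)-f_i''(b)|\le L|a-b|$ for all $a,b$. Define $F(x)=\frac12 x^T(I-W)x+\alpha\sum_{i=1}^n f_i(x_i)$ for $x\in\mathbb{R}^n$, with minimum value $F^*$ and minimizer $x^*$. Let $g(x)=\nabla F(x)$, $G(x)=\mathrm{diag}(f_1''(x_1),\dots,f_n''(x_n))$, $H(x)=\nabla^2F(x)=I-W+\alpha G(x)$. Let $W_d$ be the diagonal matrix with $[W_d]_{ii}=W_{ii}$,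 and set $D(x)=\alpha G(x)+2(I-W_d)$ (diagonal, positive definite) and $B=I-2W_d+W$, so $H(x)=D(x)-B$. Define the approximate Hessian inverse $\hat H(x)^{-1}=D(x)^{-1/2}\big(I+D(x)^{-1/2}BD(x)^{-1/2}\big)D(x)^{-1/2}$. Constants: $\rho=\frac{2(1-\delta)}{2(1-\delta)+\alpha m}$, $\Lambda=\frac{1+\rho}{2(1-\Delta)+\alpha m}$, $\lambda=\frac{1}{2(1-\delta)+\alpha M}$. Algorithm (asynchronous network Newton). Given $x(0)\in\mathbb{R}^n$ and stepsize $\varepsilon>0$, let $\Phi(1),\Phi(2),\dots$ be i.i.d. random diagonal $n\times n$ matrices, each equal to $e_ie_i^T$ (the matrix with a single $1$ in position $(i,i)$ and zeros elsewhere) with probability $1/n$ for each $i=1,\dots,n$ (i.e., one uniformly random agent is active per iteration). The iterates are $x(t)=x(t-1)-\varepsilon\,\Phi(t)\hat H(x(t-1))^{-1}g(x(t-1))$, $t\ge1$. Write $g(t)=g(x(t))$, $D(t)=D(x(t))$, $H(t)=H(x(t))$, $\hat H(t)^{-1}=\hat H(x(t))^{-1}$. $\mathcal{F}_t$ denotes the $\sigma$-field generated by $\Phi(1),\dots,\Phi(t)$ (so $x(t)$ is $\mathcal{F}_t$-measurable). *)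

From Stdlib Require Import Reals Lra List.
Import ListNotations.
Open Scope R_scope.

(* Vectors in R^n are functions nat -> R (only indices < n matter);
   n x n matrices are functions nat -> nat -> R. *)

Fixpoint rsum (n : nat) (f : nat -> R) : R :=
  match n with
  | O => 0
  | S k => rsum k f + f k
  end.

Definition kron (i j : nat) : R := if Nat.eqb i j then 1 else 0.

Definition Fobj (n : nat) (W : nat -> nat -> R) (alpha : R)
  (f : nat -> R -> R) (x : nat -> R) : R :=
  / 2 * rsum n (fun i => x i * rsum n (fun j => (kron i j - W i j) * x j))
  + alpha * rsum n (fun i => f i (x i)).

(* g(x) = grad F(x) = (I - W) x + alpha (f_i'(x_i))_i, with f1 i = f_i' *)
Definition grad (n : nat) (W : nat -> nat -> R) (alpha : R)
  (f1 : nat -> R -> R) (x : nat -> R) : nat -> R :=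
  fun i => rsum n (fun j => (kron i j - W i j) * x j) + alpha * f1 i (x i).

(* D(x) = alpha G(x) + 2 (I - W_d), diagonal entries; f2 i = f_i'' *)
Definition Ddiag (W : nat -> nat -> R) (alpha : R) (f2 : nat -> R -> R)
  (x : nat -> R) : nat -> R :=
  fun i => alpha * f2 i (x i) + 2 * (1 - W i i).

Definition Bmat (W : nat -> nat -> R) : nat -> nat -> R :=
  fun i j => kron i j * (1 - 2 * W i i) + W i j.

(* Hhat(x)^{-1} v = D^{-1/2} (I + D^{-1/2} B D^{-1/2}) D^{-1/2} v *)
Definition Hhat_inv_apply (n : nat) (W : nat -> nat -> R) (alpha : R)
  (f2 : nat -> R -> R) (x v : nat -> R) : nat -> R :=
  let s := fun i => / sqrt (Ddiag W alpha f2 x i) in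
  let y := fun i => s i * v i in
  let z := fun i => y i + s i * rsum n (fun j => Bmat W i j * (s j * y j)) in
  fun i => s i * z i.

(* One iteration with Phi = e_k e_k^T (agent k active):
   x <- x - eps * Phi * Hhat(x)^{-1} g(x) *)
Definition ann_step (n : nat) (W : nat -> nat -> R) (alpha : R)
  (f1 f2 : nat -> R -> R) (eps : R) (x : nat -> R) (k : nat) : nat -> R :=
  fun j => if Nat.eqb j k
           then x j - eps * Hhat_inv_apply n W alpha f2 x (grad n W alpha f1 x) j
           else x j.

(* x(t) for a given realization (list of active agents Phi(1), ..., Phi(t)) *)
Definition ann_run (n : nat) (W : nat -> nat -> R) (alpha : R)
  (f1 f2 : nat -> R -> R) (eps : R) (x0 : nat -> R) (s : list nat) : nat -> R :=
  fold_left (ann_step n W alpha f1 f2 eps) s x0.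

Fixpoint all_seqs (n t : nat) : list (list nat) :=
  match t with
  | O => [ [] ]
  | S t' => flat_map (fun k => map (cons k) (all_seqs n t')) (seq 0 n)
  end.

(* E[F(x(t))]: the Phi(1..t) are i.i.d. uniform on {e_i e_i^T}, so the law of
   (Phi(1),...,Phi(t)) is uniform on the n^t sequences. *)
Definition expected_F (n : nat) (W : nat -> nat -> R) (alpha : R)
  (f f1 f2 : nat -> R -> R) (eps : R) (x0 : nat -> R) (t : nat) : R :=
  / (INR n ^ t) *
  fold_right Rplus 0
    (map (fun s => Fobj n W alpha f (ann_run n W alpha f1 f2 eps x0 s))
         (all_seqs n t)).

Definition rho_c (delta alpha m : R) : R :=
  2 * (1 - delta) / (2 * (1 - delta) + alpha * m).
Definition Lambda_c (delta Delta alpha m : R) : R :=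
  (1 + rho_c delta alpha m) / (2 * (1 - Delta) + alpha * m).
Definition lambda_c (delta alpha M : R) : R :=
  1 / (2 * (1 - delta) + alpha * M).

From Stdlib Require Import Reals Lra List Lia FunctionalExtensionality.
Open Scope R_scope.

(* One step moves a uniformly random agent k by -eps (Hhat^-1 g)_k.  Since F restricted to a
   coordinate has curvature at most 1 - W_kk + alpha M <= 1/lambda, averaging the
   second-order Taylor bound over k gives
     E F(x+) <= F(x) - (eps/n) g^T Hhat^-1 g + eps^2/(2 n lambda) |Hhat^-1 g|^2.
   Writing Hhat^-1 = D^-1 + D^-1 B D^-1 with 0 <= B <= 2 (I - W_d) (both bounds follow from
   2 |W_ij u_i u_j| <= W_ij (u_i^2 + u_j^2) and W being symmetric and stochastic), the
   spectrum of Hhat^-1 lies in [lambda, Lambda]; hence |Hhat^-1 g|^2 <= Lambda g^T Hhat^-1 g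
   and g^T Hhat^-1 g >= lambda |g|^2.  Strong convexity of F with modulus alpha m gives
   |g|^2 >= 2 alpha m (F(x) - Fstar), so E[F(x+) - Fstar] <= (1 - beta) (F(x) - Fstar), and the
   expectation over i.i.d. agent choices iterates this contraction. *)

Lemma rsum_ext n f g : (forall i, (i < n)%nat -> f i = g i) -> rsum n f = rsum n g.
Proof.
  induction n; simpl; intros H; auto.
  rewrite IHn by (intros; apply H; lia). rewrite H by lia. reflexivity.
Qed.

Lemma rsum_le n f g : (forall i, (i < n)%nat -> f i <= g i) -> rsum n f <= rsum n g.
Proof.
  induction n; simpl; intros H; [lra|].
  pose proof (IHn ltac:(intros; apply H; lia)). pose proof (H n ltac:(lia)). lra.
Qed.

Lemma rsum_plus n f g : rsum n (fun i => f i + g i) = rsum n f + rsum n g.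
Proof. induction n; simpl; [lra|]. rewrite IHn; lra. Qed.

Lemma rsum_minus n f g : rsum n (fun i => f i - g i) = rsum n f - rsum n g.
Proof. induction n; simpl; [lra|]. rewrite IHn; lra. Qed.

Lemma rsum_scal n c f : rsum n (fun i => c * f i) = c * rsum n f.
Proof. induction n; simpl; [lra|]. rewrite IHn; lra. Qed.

Lemma rsum_const n c : rsum n (fun _ => c) = INR n * c.
Proof. induction n; simpl rsum; [simpl; lra|]. rewrite IHn, S_INR; lra. Qed.

Lemma rsum_ge0 n f : (forall i, (i < n)%nat -> 0 <= f i) -> 0 <= rsum n f.
Proof. intros H. rewrite <- (Rmult_0_r (INR n)), <- rsum_const. now apply rsum_le. Qed.

Lemma rsum_swap n p F :
  rsum n (fun i => rsum p (fun j => F i j)) = rsum p (fun j => rsum n (fun i => F i j)).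
Proof.
  induction n; simpl. { induction p; simpl; lra. }
  rewrite IHn, <- rsum_plus. reflexivity.
Qed.

Lemma kron_sym i j : kron i j = kron j i.
Proof. unfold kron. now rewrite Nat.eqb_sym. Qed.

Lemma kron_diag i : kron i i = 1.
Proof. unfold kron. now rewrite Nat.eqb_refl. Qed.

Lemma kron_neq i j : i <> j -> kron i j = 0.
Proof. intros H. unfold kron. now destruct (Nat.eqb_spec i j). Qed.

Lemma rsum_kronl n k c : (k < n)%nat -> rsum n (fun i => kron i k * c i) = c k.
Proof.
  induction n as [|n IH]; simpl; intros Hk; [lia|].
  destruct (Nat.eq_dec k n) as [->|Hne].
  - rewrite kron_diag, (rsum_ext n _ (fun _ => 0)), rsum_const; [ring|].
    intros i Hi. rewrite kron_neq by lia. ring.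
  - rewrite IH, kron_neq by lia. ring.
Qed.

Lemma rsum_kronr n k c : (k < n)%nat -> rsum n (fun j => kron k j * c j) = c k.
Proof.
  intros Hk. rewrite <- (rsum_kronl n k c Hk).
  apply rsum_ext; intros. now rewrite kron_sym.
Qed.

Definition symmetric (n : nat) (A : nat -> nat -> R) : Prop :=
  forall i j, (i < n)%nat -> (j < n)%nat -> A i j = A j i.

Definition mulmv (n : nat) (A : nat -> nat -> R) (v : nat -> R) : nat -> R :=
  fun i => rsum n (fun j => A i j * v j).

Definition qform (n : nat) (A : nat -> nat -> R) (v : nat -> R) : R :=
  rsum n (fun i => v i * mulmv n A v i).

Lemma qform_double_sum n A v :
  qform n A v = rsum n (fun i => rsum n (fun j => v i * (A i j * v j))).
Proof. apply rsum_ext; intros. unfold mulmv. now rewrite rsum_scal. Qed.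

Lemma rsum_mulmv_sym n A u v : symmetric n A ->
  rsum n (fun i => u i * mulmv n A v i) = rsum n (fun i => v i * mulmv n A u i).
Proof.
  intros A_sym. unfold mulmv.
  rewrite (rsum_ext n _ (fun i => rsum n (fun j => u i * (A i j * v j))))
    by (intros; now rewrite rsum_scal).
  rewrite rsum_swap. apply rsum_ext; intros j Hj.
  rewrite <- rsum_scal. apply rsum_ext; intros i Hi. rewrite (A_sym i j) by auto. ring.
Qed.

Lemma qform_add n A x d : symmetric n A ->
  qform n A (fun i => x i + d i)
  = qform n A x + 2 * rsum n (fun i => d i * mulmv n A x i) + qform n A d.
Proof.
  intros A_sym.
  transitivity (qform n A x + rsum n (fun i => x i * mulmv n A d i)
                + rsum n (fun i => d i * mulmv n A x i) + qform n A d).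
  - unfold qform. rewrite <- !rsum_plus. apply rsum_ext; intros i _. unfold mulmv.
    rewrite (rsum_ext n _ (fun j => A i j * x j + A i j * d j)), rsum_plus by (intros; ring).
    ring.
  - rewrite (rsum_mulmv_sym n A x d A_sym). ring.
Qed.

Lemma mulmv_scal n A c v i : mulmv n A (fun j => c * v j) i = c * mulmv n A v i.
Proof. unfold mulmv. rewrite <- rsum_scal. apply rsum_ext; intros; ring. Qed.

Lemma qform_scal n A c v : qform n A (fun i => c * v i) = c ^ 2 * qform n A v.
Proof.
  unfold qform. rewrite <- rsum_scal. apply rsum_ext; intros i _. rewrite mulmv_scal. ring.
Qed.

Lemma qform_kron n A k : (k < n)%nat -> qform n A (fun i => kron i k) = A k k.
Proof.
  intros Hk. unfold qform. rewrite (rsum_kronl n k (mulmv n A (fun i => kron i k)) Hk).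
  unfold mulmv. rewrite <- (rsum_kronl n k (A k) Hk). apply rsum_ext; intros; ring.
Qed.

Lemma mulmv_sq_le n A Lam g : symmetric n A -> 0 < Lam ->
  (forall v, 0 <= qform n A v) -> (forall v, qform n A v <= Lam * rsum n (fun i => v i ^ 2)) ->
  rsum n (fun i => mulmv n A g i ^ 2) <= Lam * qform n A g.
Proof.
  intros A_sym Lam_pos A_psd A_le.
  set (h := mulmv n A g).
  (* [0 <= q(Lam g - h) = Lam^2 q(g) - 2 Lam |h|^2 + q(h)] and [q(h) <= Lam |h|^2] *)
  assert (expand : qform n A (fun i => Lam * g i + -1 * h i)
     = Lam ^ 2 * qform n A g - 2 * Lam * rsum n (fun i => h i ^ 2) + qform n A h).
  { rewrite qform_add, !qform_scal by exact A_sym.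
    rewrite (rsum_ext n _ (fun i => -1 * Lam * h i ^ 2)), rsum_scal by
      (intros; rewrite mulmv_scal; unfold h; ring).
    ring. }
  pose proof (A_psd (fun i => Lam * g i + -1 * h i)) as q_ge0.
  pose proof (A_le h) as qh_le.
  rewrite expand in q_ge0. nra.
Qed.

Definition laplacian (W : nat -> nat -> R) : nat -> nat -> R := fun i j => kron i j - W i j.

Lemma laplacian_sym n W : symmetric n W -> symmetric n (laplacian W).
Proof. intros W_sym i j Hi Hj. unfold laplacian. now rewrite kron_sym, W_sym. Qed.

Section Consensus.

Variables (n : nat) (W : nat -> nat -> R).
Hypothesis W_sym : symmetric n W.
Hypothesis W_nonneg : forall i j, (i < n)%nat -> (j < n)%nat -> 0 <= W i j.
Hypothesis W_stoch : forall i, (i < n)%nat -> rsum n (fun j => W i j) = 1.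

Lemma rsum_W_mean a : rsum n (fun i => rsum n (fun j => W i j * (a i + a j) / 2)) = rsum n a.
Proof.
  assert (rows : rsum n (fun i => rsum n (fun j => W i j * a i)) = rsum n a).
  { apply rsum_ext; intros i Hi.
    rewrite (rsum_ext n _ (fun j => a i * W i j)), rsum_scal, W_stoch by (auto || intros; ring).
    ring. }
  assert (cols : rsum n (fun i => rsum n (fun j => W i j * a j)) = rsum n a).
  { rewrite rsum_swap. apply rsum_ext; intros j Hj.
    rewrite (rsum_ext n _ (fun i => a j * W j i)), rsum_scal, W_stoch by
      (auto || intros; rewrite W_sym by auto; ring).
    ring. }
  transitivity (/ 2 * rsum n (fun i => rsum n (fun j => W i j * a i))
                + / 2 * rsum n (fun i => rsum n (fun j => W i j * a j))).
  - rewrite <- !rsum_scal, <- rsum_plus. apply rsum_ext; intros i _.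
    rewrite <- !rsum_scal, <- rsum_plus. apply rsum_ext; intros; field.
  - rewrite rows, cols. field.
Qed.

Lemma rsum_kron_W_mean c a :
  rsum n (fun i => rsum n (fun j => kron i j * c i + W i j * (a i + a j) / 2))
  = rsum n c + rsum n a.
Proof.
  rewrite <- (rsum_W_mean a), <- rsum_plus. apply rsum_ext; intros i Hi.
  rewrite rsum_plus, (rsum_kronr n i (fun _ => c i) Hi). reflexivity.
Qed.

Lemma qform_laplacian_ge0 v : 0 <= qform n (laplacian W) v.
Proof.
  rewrite qform_double_sum.
  replace 0 with (rsum n (fun i => rsum n (fun j =>
                    kron i j * v i ^ 2 + W i j * (-1 * v i ^ 2 + -1 * v j ^ 2) / 2)))
    by (rewrite rsum_kron_W_mean, rsum_scal; ring).
  apply rsum_le; intros i Hi; apply rsum_le; intros j Hj. unfold laplacian.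
  destruct (Nat.eq_dec i j) as [<-|Hne].
  - rewrite kron_diag. lra.
  - rewrite kron_neq by exact Hne.
    pose proof (Rmult_le_pos _ _ (W_nonneg i j Hi Hj) (pow2_ge_0 (v i - v j))). nra.
Qed.

Lemma qform_Bmat_ge0 u : 0 <= qform n (Bmat W) u.
Proof.
  rewrite qform_double_sum.
  replace 0 with (rsum n (fun i => rsum n (fun j =>
                    kron i j * u i ^ 2 + W i j * (-1 * u i ^ 2 + -1 * u j ^ 2) / 2)))
    by (rewrite rsum_kron_W_mean, rsum_scal; ring).
  apply rsum_le; intros i Hi; apply rsum_le; intros j Hj. unfold Bmat.
  destruct (Nat.eq_dec i j) as [<-|Hne].
  - rewrite kron_diag. lra.
  - rewrite kron_neq by exact Hne.
    pose proof (Rmult_le_pos _ _ (W_nonneg i j Hi Hj) (pow2_ge_0 (u i + u j))). nra.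
Qed.

Lemma qform_Bmat_le u : qform n (Bmat W) u <= rsum n (fun i => 2 * (1 - W i i) * u i ^ 2).
Proof.
  rewrite qform_double_sum.
  replace (rsum n (fun i => 2 * (1 - W i i) * u i ^ 2)) with
    (rsum n (fun i => rsum n (fun j =>
       kron i j * ((1 - 2 * W i i) * u i ^ 2) + W i j * (u i ^ 2 + u j ^ 2) / 2)))
    by (rewrite rsum_kron_W_mean, <- rsum_plus; apply rsum_ext; intros; ring).
  apply rsum_le; intros i Hi; apply rsum_le; intros j Hj. unfold Bmat.
  destruct (Nat.eq_dec i j) as [<-|Hne].
  - rewrite kron_diag. lra.
  - rewrite kron_neq by exact Hne.
    pose proof (Rmult_le_pos _ _ (W_nonneg i j Hi Hj) (pow2_ge_0 (u i - u j))). nra.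
Qed.

End Consensus.

Lemma nondecreasing_of_deriv_ge0 (F F' : R -> R) a b : a <= b ->
  (forall c, a <= c <= b -> derivable_pt_lim F c (F' c)) ->
  (forall c, a <= c <= b -> 0 <= F' c) -> F a <= F b.
Proof.
  intros Hab dF F'_ge0. destruct (Req_dec a b) as [<-|Hne]; [lra|].
  destruct (MVT_cor2 F F' a b ltac:(lra) dF) as [c [Hc Hac]].
  pose proof (F'_ge0 c ltac:(lra)). nra.
Qed.

Lemma tangent_line_le (F F1 F2 : R -> R) :
  (forall s, derivable_pt_lim F s (F1 s)) -> (forall s, derivable_pt_lim F1 s (F2 s)) ->
  (forall s, 0 <= F2 s) -> forall a b, F a + F1 a * (b - a) <= F b.
Proof.
  intros dF dF1 F2_ge0 a b.
  assert (F1_mono : forall u v, u <= v -> F1 u <= F1 v)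
    by (intros u v Huv; apply (nondecreasing_of_deriv_ge0 F1 F2); auto).
  destruct (Rtotal_order a b) as [Hab|[<-|Hba]].
  - destruct (MVT_cor2 F F1 a b Hab (fun c _ => dF c)) as [c [Hc Hac]].
    pose proof (F1_mono a c ltac:(lra)). nra.
  - lra.
  - destruct (MVT_cor2 F F1 b a Hba (fun c _ => dF c)) as [c [Hc Hbc]].
    pose proof (F1_mono c a ltac:(lra)). nra.
Qed.

Lemma derivable_pt_lim_sub_poly2 (F : R -> R) s l e p q :
  derivable_pt_lim F s l ->
  derivable_pt_lim (fun x => e * F x - (p * x ^ 2 + q * x)) s (e * l - (2 * p * s + q)).
Proof.
  intros dF.
  replace (e * l - (2 * p * s + q)) with (e * l - (p * (INR 2 * s ^ 1) + q * 1))
    by (simpl; ring).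
  apply (derivable_pt_lim_minus (mult_real_fct e F)
           (fun x => p * x ^ 2 + q * id x)).
  - now apply derivable_pt_lim_scal.
  - apply (derivable_pt_lim_plus (mult_real_fct p (fun x => x ^ 2)) (mult_real_fct q id)).
    + apply derivable_pt_lim_scal, derivable_pt_lim_pow.
    + apply derivable_pt_lim_scal, derivable_pt_lim_id.
Qed.

(* Both bounds come from [tangent_line_le] applied to [F - c/2 x^2] and to [C/2 x^2 - F]. *)
Lemma taylor_second_order (F F1 F2 : R -> R) c C :
  (forall s, derivable_pt_lim F s (F1 s)) -> (forall s, derivable_pt_lim F1 s (F2 s)) ->
  (forall s, c <= F2 s <= C) ->
  forall a b, c / 2 * (b - a) ^ 2 <= F b - F a - F1 a * (b - a) <= C / 2 * (b - a) ^ 2.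
Proof.
  intros dF dF1 F2_bounds a b.
  assert (bound : forall e k, (forall s, 0 <= e * F2 s - 2 * k) ->
            k * (b - a) ^ 2 <= e * (F b - F a - F1 a * (b - a))).
  { intros e k F2_ge.
    assert (dG : forall s, derivable_pt_lim (fun x => e * F x - (k * x ^ 2 + 0 * x)) s
                             (e * F1 s - (0 * s ^ 2 + 2 * k * s))).
    { intros s. replace (e * F1 s - (0 * s ^ 2 + 2 * k * s)) with (e * F1 s - (2 * k * s + 0))
        by ring.
      now apply derivable_pt_lim_sub_poly2. }
    assert (dG1 : forall s, derivable_pt_lim (fun x => e * F1 x - (0 * x ^ 2 + 2 * k * x)) s
                              (e * F2 s - (2 * 0 * s + 2 * k)))
      by (intros; now apply derivable_pt_lim_sub_poly2).
    pose proof (tangent_line_le _ _ _ dG dG1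
                  ltac:(intros s; specialize (F2_ge s); lra) a b) as T.
    cbv beta in T. nra. }
  split.
  - assert (B := bound 1 (c / 2) ltac:(intros s; specialize (F2_bounds s); lra)). lra.
  - assert (B := bound (-1) (- (C / 2)) ltac:(intros s; specialize (F2_bounds s); lra)). lra.
Qed.

Lemma Fobj_qform n W alpha f y :
  Fobj n W alpha f y = / 2 * qform n (laplacian W) y + alpha * rsum n (fun i => f i (y i)).
Proof. reflexivity. Qed.

Lemma grad_mulmv n W alpha f1 x i :
  grad n W alpha f1 x i = mulmv n (laplacian W) x i + alpha * f1 i (x i).
Proof. reflexivity. Qed.

Section Objective.

Variables (n : nat) (W : nat -> nat -> R) (alpha m M : R) (f f1 f2 : nat -> R -> R).
Hypothesis W_sym : symmetric n W.
Hypothesis alpha_pos : 0 < alpha.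
Hypothesis f_deriv : forall i s, (i < n)%nat -> derivable_pt_lim (f i) s (f1 i s).
Hypothesis f1_deriv : forall i s, (i < n)%nat -> derivable_pt_lim (f1 i) s (f2 i s).
Hypothesis f2_bounds : forall i s, (i < n)%nat -> m <= f2 i s <= M.
Hypothesis W_nonneg : forall i j, (i < n)%nat -> (j < n)%nat -> 0 <= W i j.
Hypothesis W_stoch : forall i, (i < n)%nat -> rsum n (fun j => W i j) = 1.
Hypothesis m_pos : 0 < m.

Lemma f_taylor i a b : (i < n)%nat ->
  m / 2 * (b - a) ^ 2 <= f i b - f i a - f1 i a * (b - a) <= M / 2 * (b - a) ^ 2.
Proof.
  intros Hi. apply (taylor_second_order (f i) (f1 i) (f2 i)); intros s; auto.
Qed.

Lemma Fobj_bregman x y :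
  Fobj n W alpha f y - Fobj n W alpha f x - rsum n (fun i => grad n W alpha f1 x i * (y i - x i))
  = / 2 * qform n (laplacian W) (fun i => y i - x i)
    + alpha * rsum n (fun i => f i (y i) - f i (x i) - f1 i (x i) * (y i - x i)).
Proof.
  rewrite !Fobj_qform.
  replace (qform n (laplacian W) y) with (qform n (laplacian W) (fun i => x i + (y i - x i)))
    by (f_equal; extensionality i; ring).
  rewrite qform_add by now apply laplacian_sym.
  rewrite (rsum_ext n (fun i => grad n W alpha f1 x i * (y i - x i))
             (fun i => (y i - x i) * mulmv n (laplacian W) x i
                                   + alpha * (f1 i (x i) * (y i - x i))))
    by (intros; rewrite grad_mulmv; ring).
  rewrite rsum_plus, rsum_scal, !rsum_minus. lra.
Qed.

Lemma Fobj_coord_step x k tau : (k < n)%nat ->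
  Fobj n W alpha f (fun i => x i + tau * kron i k)
  <= Fobj n W alpha f x + tau * grad n W alpha f1 x k + tau ^ 2 / 2 * (1 - W k k + alpha * M).
Proof.
  intros Hk. pose proof (Fobj_bregman x (fun i => x i + tau * kron i k)) as E. cbv beta in E.
  replace (fun i => x i + tau * kron i k - x i) with (fun i => tau * kron i k) in E
    by (extensionality i; ring).
  rewrite qform_scal, qform_kron in E by exact Hk.
  rewrite (rsum_ext n (fun i => grad n W alpha f1 x i * (x i + tau * kron i k - x i))
             (fun i => kron i k * (tau * grad n W alpha f1 x i))),
    rsum_kronl in E by (auto || intros; ring).
  assert (f_step : rsum n (fun i => f i (x i + tau * kron i k) - f i (x i)
                                    - f1 i (x i) * (x i + tau * kron i k - x i))
                   <= M / 2 * tau ^ 2).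
  { rewrite <- (rsum_kronl n k (fun _ => M / 2 * tau ^ 2) Hk).
    apply rsum_le; intros i Hi. destruct (Nat.eq_dec i k) as [->|Hne].
    - rewrite kron_diag. destruct (f_taylor k (x k) (x k + tau * 1) Hk). nra.
    - rewrite kron_neq, Rmult_0_r, Rplus_0_r by exact Hne. lra. }
  unfold laplacian in E. rewrite kron_diag in E.
  pose proof (Rmult_le_compat_l alpha _ _ (Rlt_le _ _ alpha_pos) f_step). lra.
Qed.

Lemma Fobj_mean_coord_step x h eps lam : (0 < n)%nat -> 0 < lam ->
  (forall k, (k < n)%nat -> lam * (1 - W k k + alpha * M) <= 1) ->
  / INR n * rsum n (fun k => Fobj n W alpha f (fun i => x i + (- eps * h k) * kron i k))
  <= Fobj n W alpha f x - eps / INR n * rsum n (fun i => grad n W alpha f1 x i * h i)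
     + eps ^ 2 / (2 * INR n * lam) * rsum n (fun i => h i ^ 2).
Proof.
  intros n_pos lam_pos lam_le. pose proof (lt_0_INR n n_pos) as nR_pos.
  assert (step : forall k, (k < n)%nat ->
            Fobj n W alpha f (fun i => x i + (- eps * h k) * kron i k)
            <= Fobj n W alpha f x - eps * (grad n W alpha f1 x k * h k)
               + eps ^ 2 / (2 * lam) * h k ^ 2).
  { intros k Hk. eapply Rle_trans; [now apply Fobj_coord_step|].
    pose proof (lam_le k Hk). pose proof (pow2_ge_0 (eps * h k)).
    assert (tau_sq : (- eps * h k) ^ 2 / 2 * (1 - W k k + alpha * M)
                     <= eps ^ 2 / (2 * lam) * h k ^ 2).
    { apply (Rmult_le_reg_l (2 * lam)); [lra|].
      replace (2 * lam * (eps ^ 2 / (2 * lam) * h k ^ 2)) with ((eps * h k) ^ 2) by (field; lra).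
      replace (2 * lam * ((- eps * h k) ^ 2 / 2 * (1 - W k k + alpha * M)))
        with ((eps * h k) ^ 2 * (lam * (1 - W k k + alpha * M))) by field.
      nra. }
    lra. }
  pose proof (Rmult_le_compat_l (/ INR n) _ _
                (Rlt_le _ _ (Rinv_0_lt_compat _ nR_pos)) (rsum_le _ _ _ step)) as mean.
  rewrite rsum_plus, rsum_minus, rsum_const, !rsum_scal in mean.
  eapply Rle_trans; [exact mean|]. right. field. lra.
Qed.

(* Polyak-Lojasiewicz inequality, from strong convexity with modulus [alpha * m]. *)
Lemma Fobj_sub_le_grad_sq x y :
  2 * (alpha * m) * (Fobj n W alpha f x - Fobj n W alpha f y)
  <= rsum n (fun i => grad n W alpha f1 x i ^ 2).
Proof.
  pose proof (Fobj_bregman x y) as E.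
  pose proof (qform_laplacian_ge0 n W W_sym W_nonneg W_stoch (fun i => y i - x i)) as q_ge0.
  assert (strong : rsum n (fun i => m / 2 * (y i - x i) ^ 2)
                   <= rsum n (fun i => f i (y i) - f i (x i) - f1 i (x i) * (y i - x i)))
    by (apply rsum_le; intros i Hi; apply (f_taylor i (x i) (y i) Hi)).
  assert (square : rsum n (fun i => 2 * (alpha * m) * (-1 * (grad n W alpha f1 x i * (y i - x i))
                                    - alpha * (m / 2 * (y i - x i) ^ 2)))
                   <= rsum n (fun i => grad n W alpha f1 x i ^ 2)).
  { apply rsum_le; intros i _.
    pose proof (pow2_ge_0 (grad n W alpha f1 x i + alpha * m * (y i - x i))). nra. }
  rewrite rsum_scal, rsum_minus, (rsum_scal n (-1)), (rsum_scal n alpha) in square.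
  pose proof (Rmult_le_compat_l alpha _ _ (Rlt_le _ _ alpha_pos) strong).
  assert (gap : Fobj n W alpha f x - Fobj n W alpha f y
                <= -1 * rsum n (fun i => grad n W alpha f1 x i * (y i - x i))
                   - alpha * rsum n (fun i => m / 2 * (y i - x i) ^ 2)) by lra.
  apply (Rmult_le_compat_l (2 * (alpha * m))) in gap; [lra | nra].
Qed.

End Objective.

Definition Hhat_inv_mat (W : nat -> nat -> R) (D : nat -> R) : nat -> nat -> R :=
  fun i j => kron i j / D i + Bmat W i j / (D i * D j).

Section HhatInverse.

Variables (n : nat) (W : nat -> nat -> R) (D : nat -> R).
Hypothesis W_sym : symmetric n W.
Hypothesis W_nonneg : forall i j, (i < n)%nat -> (j < n)%nat -> 0 <= W i j.
Hypothesis W_stoch : forall i, (i < n)%nat -> rsum n (fun j => W i j) = 1.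
Hypothesis D_pos : forall i, (i < n)%nat -> 0 < D i.

Lemma Hhat_inv_mat_sym : symmetric n (Hhat_inv_mat W D).
Proof.
  intros i j Hi Hj. unfold Hhat_inv_mat, Bmat.
  rewrite (kron_sym j i), (W_sym j i), (Rmult_comm (D j)) by auto.
  destruct (Nat.eq_dec i j) as [<-|Hne]; [reflexivity|].
  rewrite kron_neq by exact Hne. unfold Rdiv. ring.
Qed.

Lemma mulmv_Hhat_inv v i : (i < n)%nat ->
  mulmv n (Hhat_inv_mat W D) v i = v i / D i + / D i * mulmv n (Bmat W) (fun j => v j / D j) i.
Proof.
  intros Hi. unfold mulmv, Hhat_inv_mat.
  rewrite (rsum_ext n _ (fun j => kron i j * (v j / D i) + / D i * (Bmat W i j * (v j / D j)))).
  - now rewrite rsum_plus, rsum_kronr, rsum_scal.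
  - intros j Hj. pose proof (D_pos i Hi). pose proof (D_pos j Hj). field. lra.
Qed.

Lemma qform_Hhat_inv v :
  qform n (Hhat_inv_mat W D) v
  = rsum n (fun i => v i ^ 2 / D i) + qform n (Bmat W) (fun i => v i / D i).
Proof.
  unfold qform at 1 2. rewrite <- rsum_plus. apply rsum_ext; intros i Hi.
  rewrite mulmv_Hhat_inv by exact Hi. pose proof (D_pos i Hi). field. lra.
Qed.

Lemma qform_Hhat_inv_ge lam v : (forall i, (i < n)%nat -> lam * D i <= 1) ->
  lam * rsum n (fun i => v i ^ 2) <= qform n (Hhat_inv_mat W D) v.
Proof.
  intros lam_le. rewrite qform_Hhat_inv.
  pose proof (qform_Bmat_ge0 n W W_sym W_nonneg W_stoch (fun i => v i / D i)).
  enough (lam * rsum n (fun i => v i ^ 2) <= rsum n (fun i => v i ^ 2 / D i)) by lra.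
  rewrite <- rsum_scal. apply rsum_le; intros i Hi.
  pose proof (D_pos i Hi). pose proof (lam_le i Hi). pose proof (pow2_ge_0 (v i)).
  apply (Rmult_le_reg_r (D i)); [lra|].
  replace (v i ^ 2 / D i * D i) with (v i ^ 2) by (field; lra). nra.
Qed.

Lemma qform_Hhat_inv_le Lam v :
  (forall i, (i < n)%nat -> / D i + 2 * (1 - W i i) * (/ D i) ^ 2 <= Lam) ->
  qform n (Hhat_inv_mat W D) v <= Lam * rsum n (fun i => v i ^ 2).
Proof.
  intros Lam_ge. rewrite qform_Hhat_inv.
  pose proof (qform_Bmat_le n W W_sym W_nonneg W_stoch (fun i => v i / D i)).
  enough (rsum n (fun i => v i ^ 2 / D i) + rsum n (fun i => 2 * (1 - W i i) * (v i / D i) ^ 2)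
          <= Lam * rsum n (fun i => v i ^ 2)) by lra.
  rewrite <- rsum_scal, <- rsum_plus. apply rsum_le; intros i Hi.
  pose proof (D_pos i Hi). pose proof (Lam_ge i Hi). pose proof (pow2_ge_0 (v i)).
  replace (v i ^ 2 / D i + 2 * (1 - W i i) * (v i / D i) ^ 2)
    with (v i ^ 2 * (/ D i + 2 * (1 - W i i) * (/ D i) ^ 2)) by (field; lra).
  nra.
Qed.

End HhatInverse.

Lemma Hhat_inv_apply_mulmv n W alpha f2 x v :
  (forall j, (j < n)%nat -> 0 < Ddiag W alpha f2 x j) ->
  forall i, (i < n)%nat ->
  Hhat_inv_apply n W alpha f2 x v i = mulmv n (Hhat_inv_mat W (Ddiag W alpha f2 x)) v i.
Proof.
  intros D_pos i Hi. rewrite mulmv_Hhat_inv by auto.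
  unfold Hhat_inv_apply, mulmv. cbv zeta. set (D := Ddiag W alpha f2 x) in *.
  assert (inv_sqrt : forall j, (j < n)%nat -> / sqrt (D j) * / sqrt (D j) = / D j)
    by (intros j Hj; rewrite <- Rinv_mult, sqrt_sqrt; auto; now apply Rlt_le, D_pos).
  rewrite (rsum_ext n _ (fun j => Bmat W i j * (v j / D j)))
    by (intros j Hj; unfold Rdiv; rewrite <- (inv_sqrt j Hj); ring).
  transitivity (/ sqrt (D i) * / sqrt (D i)
                * (v i + rsum n (fun j => Bmat W i j * (v j / D j)))); [ring|].
  rewrite inv_sqrt by exact Hi. unfold Rdiv. ring.
Qed.

Section Constants.

Variables (alpha delta Delta m M : R).
Hypothesis alpha_pos : 0 < alpha.
Hypothesis m_pos : 0 < m.
Hypothesis m_le_M : m <= M.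
Hypothesis delta_le_Delta : delta <= Delta.
Hypothesis Delta_lt1 : Delta < 1.

Lemma lambda_c_pos : 0 < lambda_c delta alpha M.
Proof. unfold lambda_c. apply Rdiv_lt_0_compat; nra. Qed.

Lemma lambda_c_mul_le1 s w : s <= M -> delta <= w ->
  lambda_c delta alpha M * (alpha * s + 2 * (1 - w)) <= 1.
Proof.
  intros s_le w_ge. unfold lambda_c.
  apply (Rmult_le_reg_l (2 * (1 - delta) + alpha * M)); [nra|].
  field_simplify; nra.
Qed.

Lemma alpha_m_lambda_c_lt1 : alpha * m * lambda_c delta alpha M < 1.
Proof.
  pose proof (lambda_c_mul_le1 m delta m_le_M (Rle_refl _)).
  pose proof lambda_c_pos. nra.
Qed.

(* [1/D + a/D^2 = (1/D) (1 + a/(c + a))] with [D = c + a], [c = alpha s >= alpha m] and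
   [a = 2 (1 - w)] in [2 (1 - Delta), 2 (1 - delta)]: the first factor is at most
   [1 / (2 (1 - Delta) + alpha m)] and the second at most [1 + rho]. *)
Lemma inv_plus_sq_le_Lambda_c s w : m <= s -> delta <= w <= Delta ->
  / (alpha * s + 2 * (1 - w)) + 2 * (1 - w) * (/ (alpha * s + 2 * (1 - w))) ^ 2
  <= Lambda_c delta Delta alpha m.
Proof.
  intros s_ge w_bounds. unfold Lambda_c, rho_c.
  set (c := alpha * s). set (a := 2 * (1 - w)).
  set (a0 := 2 * (1 - delta)). set (a1 := 2 * (1 - Delta)). set (cm := alpha * m).
  assert (0 < a1) by (unfold a1; lra). assert (a1 <= a <= a0) by (unfold a, a0, a1; lra).
  assert (0 < cm <= c) by (unfold c, cm; split; nra).
  assert (first : / (c + a) <= / (a1 + cm)) by (apply Rinv_le_contravar; lra).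
  assert (second : a / (c + a) <= a0 / (a0 + cm)).
  { apply (Rmult_le_reg_r ((c + a) * (a0 + cm))); [nra|].
    field_simplify; [nra | lra | lra]. }
  assert (0 <= a / (c + a)) by (apply Rmult_le_pos; [lra | left; apply Rinv_0_lt_compat; lra]).
  replace (/ (c + a) + a * (/ (c + a)) ^ 2) with (/ (c + a) * (1 + a / (c + a))) by (field; lra).
  unfold Rdiv at 2. rewrite (Rmult_comm (1 + a0 / (a0 + cm))).
  apply Rmult_le_compat; try lra. left; apply Rinv_0_lt_compat; lra.
Qed.

Lemma lambda_c_le_Lambda_c : lambda_c delta alpha M <= Lambda_c delta Delta alpha m.
Proof.
  pose proof (lambda_c_mul_le1 m delta m_le_M (Rle_refl _)).
  pose proof (inv_plus_sq_le_Lambda_c m delta (Rle_refl _) (conj (Rle_refl _) delta_le_Delta)).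
  set (D := alpha * m + 2 * (1 - delta)) in *.
  assert (0 < D) by (unfold D; nra). assert (0 <= 2 * (1 - delta) * (/ D) ^ 2) by nra.
  assert (lambda_c delta alpha M <= / D).
  { apply (Rmult_le_reg_r D); [lra|]. rewrite Rinv_l; lra. }
  lra.
Qed.

End Constants.

Definition ann_rate (n : nat) (alpha delta Delta m M eps : R) : R :=
  alpha * m * eps * (2 * lambda_c delta alpha M ^ 2 - eps * Lambda_c delta Delta alpha m ^ 2)
  / (INR n * lambda_c delta alpha M).

Lemma ann_rate_bounds n alpha delta Delta m M eps :
  (2 <= n)%nat -> 0 < alpha -> 0 < m -> m <= M -> delta <= Delta -> Delta < 1 ->
  0 < eps < 1 -> eps * Lambda_c delta Delta alpha m ^ 2 < 2 * lambda_c delta alpha M ^ 2 ->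
  0 < ann_rate n alpha delta Delta m M eps < 1.
Proof.
  intros n_ge2 alpha_pos m_pos m_le_M delta_le Delta_lt1 eps_bounds eps_small.
  pose proof (lambda_c_pos alpha delta Delta m M alpha_pos m_pos m_le_M delta_le Delta_lt1) as lam_pos.
  pose proof (alpha_m_lambda_c_lt1 alpha delta Delta m M alpha_pos m_pos m_le_M delta_le Delta_lt1).
  assert (nR : 2 <= INR n) by (replace 2 with (INR 2) by (simpl; lra); now apply le_INR).
  unfold ann_rate. set (lam := lambda_c delta alpha M) in *.
  set (Lam := Lambda_c delta Delta alpha m) in *.
  pose proof (pow2_ge_0 Lam).
  split.
  - destruct eps_bounds. apply Rdiv_lt_0_compat; [|nra].
    apply Rmult_lt_0_compat; [repeat apply Rmult_lt_0_compat | ]; lra.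
  - apply (Rmult_lt_reg_r (INR n * lam)); [nra|].
    unfold Rdiv. rewrite Rmult_assoc, Rinv_l, Rmult_1_r by nra.
    (* the rate is at most [2 alpha m lam / n < 2 / n <= 1] *)
    destruct eps_bounds.
    assert (am_pos : 0 < alpha * m) by nra.
    assert (0 <= eps * Lam ^ 2) by nra.
    assert (alpha * m * eps * (2 * lam ^ 2 - eps * Lam ^ 2) <= alpha * m * (2 * lam ^ 2)).
    { apply Rle_trans with (alpha * m * 1 * (2 * lam ^ 2 - eps * Lam ^ 2)).
      - apply Rmult_le_compat_r; [lra|]. apply Rmult_le_compat_l; lra.
      - rewrite Rmult_1_r. apply Rmult_le_compat_l; lra. }
    nra.
Qed.

Lemma damped_descent_bound nr eps lam Lam am e P H G :
  0 < nr -> 0 < eps -> 0 < lam <= Lam -> 0 < am -> 0 <= e ->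
  eps * Lam ^ 2 < 2 * lam ^ 2 -> H <= Lam * P -> lam * G <= P -> 2 * am * e <= G ->
  - (eps / nr) * P + eps ^ 2 / (2 * nr * lam) * H
  <= - (am * eps * (2 * lam ^ 2 - eps * Lam ^ 2) / (nr * lam)) * e.
Proof.
  intros nr_pos eps_pos [lam_pos lam_le] am_pos e_ge0 eps_small H_le G_le G_ge.
  assert (margin : 0 < 2 * lam - eps * Lam).
  { assert (eps * Lam * lam <= eps * Lam * Lam) by (apply Rmult_le_compat_l; nra).
    apply (Rmult_lt_reg_r lam); nra. }
  assert (P_ge : 2 * am * lam * e <= P) by nra.
  apply (Rmult_le_reg_l (2 * nr * lam)); [nra|].
  replace (2 * nr * lam * (- (eps / nr) * P + eps ^ 2 / (2 * nr * lam) * H))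
    with (- 2 * lam * eps * P + eps ^ 2 * H) by (field; lra).
  replace (2 * nr * lam * (- (am * eps * (2 * lam ^ 2 - eps * Lam ^ 2) / (nr * lam)) * e))
    with (- 2 * am * eps * (2 * lam ^ 2 - eps * Lam ^ 2) * e) by (field; lra).
  assert (eps ^ 2 * H <= eps ^ 2 * (Lam * P)) by (apply Rmult_le_compat_l; nra).
  assert (eps * (2 * lam - eps * Lam) * (2 * am * lam * e) <= eps * (2 * lam - eps * Lam) * P)
    by (apply Rmult_le_compat_l; nra).
  assert (am * e * (eps ^ 2 * Lam * lam) <= am * e * (eps ^ 2 * Lam ^ 2))
    by (apply Rmult_le_compat_l; nra).
  nra.
Qed.

Lemma fold_Rplus_app l1 l2 :
  fold_right Rplus 0 (l1 ++ l2) = fold_right Rplus 0 l1 + fold_right Rplus 0 l2.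
Proof. induction l1; simpl; [lra|]. rewrite IHl1. lra. Qed.

Lemma fold_Rplus_map_flat_map {A B : Type} (g : B -> R) (h : A -> list B) l :
  fold_right Rplus 0 (map g (flat_map h l))
  = fold_right Rplus 0 (map (fun k => fold_right Rplus 0 (map g (h k))) l).
Proof. induction l; simpl; auto. rewrite map_app, fold_Rplus_app, IHl. reflexivity. Qed.

Lemma fold_Rplus_map_seq n c : fold_right Rplus 0 (map c (seq 0 n)) = rsum n c.
Proof.
  induction n; [reflexivity|].
  rewrite seq_S, map_app, fold_Rplus_app, IHn. simpl. lra.
Qed.

(* Conditioning on the first active agent: [E F(x(t+1))] is the average over [k] of the
   expectation started from [ann_step x0 k]. *)
Lemma expected_F_succ n W alpha f f1 f2 eps x0 t : (0 < n)%nat ->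
  expected_F n W alpha f f1 f2 eps x0 (S t)
  = / INR n * rsum n (fun k => expected_F n W alpha f f1 f2 eps (ann_step n W alpha f1 f2 eps x0 k) t).
Proof.
  intros n_pos. pose proof (lt_0_INR n n_pos). pose proof (pow_lt (INR n) t H).
  unfold expected_F. simpl all_seqs.
  rewrite fold_Rplus_map_flat_map, fold_Rplus_map_seq, <- !rsum_scal.
  apply rsum_ext; intros k _. rewrite map_map. simpl pow. rewrite Rinv_mult, Rmult_assoc.
  reflexivity.
Qed.

Lemma expected_F_geometric n W alpha f f1 f2 eps Fs q : (0 < n)%nat -> 0 <= q ->
  (forall x, / INR n * rsum n (fun k => Fobj n W alpha f (ann_step n W alpha f1 f2 eps x k)) - Fs
             <= q * (Fobj n W alpha f x - Fs)) ->
  forall t x0, expected_F n W alpha f f1 f2 eps x0 t - Fs <= q ^ t * (Fobj n W alpha f x0 - Fs).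
Proof.
  intros n_pos q_ge0 contraction t. pose proof (lt_0_INR n n_pos).
  induction t as [|t IH]; intros x0.
  - unfold expected_F. simpl. lra.
  - rewrite expected_F_succ by exact n_pos.
    set (y := ann_step n W alpha f1 f2 eps x0).
    assert (step : rsum n (fun k => expected_F n W alpha f f1 f2 eps (y k) t)
                   <= rsum n (fun k => Fs + q ^ t * (Fobj n W alpha f (y k) - Fs))).
    { apply rsum_le; intros k _. specialize (IH (y k)). lra. }
    rewrite rsum_plus, rsum_const, rsum_scal, rsum_minus, rsum_const in step.
    apply (Rmult_le_compat_l (/ INR n)) in step; [|left; now apply Rinv_0_lt_compat].
    pose proof (Rmult_le_compat_l (q ^ t) _ _ (pow_le q t q_ge0) (contraction x0)) as decay.
    fold y in decay.
    replace (/ INR n * (INR n * Fs + q ^ t * (rsum n (fun k => Fobj n W alpha f (y k)) - INR n * Fs)))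
      with (Fs + q ^ t * (/ INR n * rsum n (fun k => Fobj n W alpha f (y k)) - Fs)) in step
      by (field; lra).
    simpl pow. lra.
Qed.

Lemma ann_step_coord n W alpha f1 f2 eps x k :
  ann_step n W alpha f1 f2 eps x k
  = fun i => x i + (- eps * Hhat_inv_apply n W alpha f2 x (grad n W alpha f1 x) k) * kron i k.
Proof.
  extensionality i. unfold ann_step.
  destruct (Nat.eqb_spec i k) as [->|Hne].
  - rewrite kron_diag. ring.
  - rewrite kron_neq by exact Hne. ring.
Qed.

Section AsyncNewton.

Variables (n : nat) (alpha delta Delta m M eps : R) (W : nat -> nat -> R).
Variables (f f1 f2 : nat -> R -> R) (xstar : nat -> R).
Hypothesis n_pos : (0 < n)%nat.
Hypothesis alpha_pos : 0 < alpha.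
Hypothesis Delta_lt1 : Delta < 1.
Hypothesis W_sym : symmetric n W.
Hypothesis W_nonneg : forall i j, (i < n)%nat -> (j < n)%nat -> 0 <= W i j.
Hypothesis W_stoch : forall i, (i < n)%nat -> rsum n (fun j => W i j) = 1.
Hypothesis W_diag : forall i, (i < n)%nat -> delta <= W i i <= Delta.
Hypothesis f_deriv : forall i s, (i < n)%nat -> derivable_pt_lim (f i) s (f1 i s).
Hypothesis f1_deriv : forall i s, (i < n)%nat -> derivable_pt_lim (f1 i) s (f2 i s).
Hypothesis m_pos : 0 < m.
Hypothesis f2_bounds : forall i s, (i < n)%nat -> m <= f2 i s <= M.
Hypothesis xstar_min : forall y, Fobj n W alpha f xstar <= Fobj n W alpha f y.
Hypothesis eps_pos : 0 < eps.
Hypothesis eps_small : eps * Lambda_c delta Delta alpha m ^ 2 < 2 * lambda_c delta alpha M ^ 2.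

Lemma delta_le_Delta : delta <= Delta.
Proof. destruct (W_diag 0 n_pos). lra. Qed.

Lemma m_le_M : m <= M.
Proof. destruct (f2_bounds 0 0 n_pos). lra. Qed.

Lemma Ddiag_pos x i : (i < n)%nat -> 0 < Ddiag W alpha f2 x i.
Proof. intros Hi. destruct (W_diag i Hi), (f2_bounds i (x i) Hi). unfold Ddiag. nra. Qed.

Lemma qform_Hhat_inv_Ddiag_ge x v :
  lambda_c delta alpha M * rsum n (fun i => v i ^ 2)
  <= qform n (Hhat_inv_mat W (Ddiag W alpha f2 x)) v.
Proof.
  apply qform_Hhat_inv_ge; auto using Ddiag_pos. intros i Hi.
  destruct (W_diag i Hi), (f2_bounds i (x i) Hi).
  apply (lambda_c_mul_le1 alpha delta Delta m M); auto using m_le_M, delta_le_Delta.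
Qed.

Lemma qform_Hhat_inv_Ddiag_le x v :
  qform n (Hhat_inv_mat W (Ddiag W alpha f2 x)) v
  <= Lambda_c delta Delta alpha m * rsum n (fun i => v i ^ 2).
Proof.
  apply qform_Hhat_inv_le; auto using Ddiag_pos. intros i Hi.
  destruct (f2_bounds i (x i) Hi). apply inv_plus_sq_le_Lambda_c; auto.
Qed.

Lemma lambda_c_mul_coord_curvature_le1 k : (k < n)%nat ->
  lambda_c delta alpha M * (1 - W k k + alpha * M) <= 1.
Proof.
  intros Hk. destruct (W_diag k Hk).
  pose proof (lambda_c_pos alpha delta Delta m M alpha_pos m_pos m_le_M delta_le_Delta Delta_lt1).
  pose proof (lambda_c_mul_le1 alpha delta Delta m M alpha_pos m_pos m_le_M delta_le_Delta
                Delta_lt1 M (W k k) (Rle_refl M) ltac:(lra)).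
  assert (lambda_c delta alpha M * (1 - W k k + alpha * M)
          <= lambda_c delta alpha M * (alpha * M + 2 * (1 - W k k)))
    by (apply Rmult_le_compat_l; lra).
  lra.
Qed.

Lemma ann_step_contraction x :
  / INR n * rsum n (fun k => Fobj n W alpha f (ann_step n W alpha f1 f2 eps x k))
    - Fobj n W alpha f xstar
  <= (1 - ann_rate n alpha delta Delta m M eps)
     * (Fobj n W alpha f x - Fobj n W alpha f xstar).
Proof.
  pose proof (lambda_c_pos alpha delta Delta m M alpha_pos m_pos m_le_M delta_le_Delta Delta_lt1)
    as lam_pos.
  pose proof (lambda_c_le_Lambda_c alpha delta Delta m M alpha_pos m_pos m_le_M delta_le_Delta
                Delta_lt1) as lam_le.
  set (lam := lambda_c delta alpha M) in *. set (Lam := Lambda_c delta Delta alpha m) in *.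
  set (A := Hhat_inv_mat W (Ddiag W alpha f2 x)).
  set (g := grad n W alpha f1 x). set (h := mulmv n A g).
  assert (steps : rsum n (fun k => Fobj n W alpha f (ann_step n W alpha f1 f2 eps x k))
                  = rsum n (fun k => Fobj n W alpha f (fun i => x i + (- eps * h k) * kron i k))).
  { apply rsum_ext; intros k Hk.
    rewrite ann_step_coord, Hhat_inv_apply_mulmv by auto using Ddiag_pos. reflexivity. }
  assert (mean := Fobj_mean_coord_step n W alpha m M f f1 f2 W_sym alpha_pos f_deriv f1_deriv
                    f2_bounds x h eps lam n_pos lam_pos lambda_c_mul_coord_curvature_le1).
  assert (h_sq : rsum n (fun i => h i ^ 2) <= Lam * qform n A g).
  { apply mulmv_sq_le; [now apply Hhat_inv_mat_sym | lra | | apply qform_Hhat_inv_Ddiag_le].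
    intros v. pose proof (qform_Hhat_inv_Ddiag_ge x v) as Av. fold lam A in Av.
    pose proof (rsum_ge0 n (fun i => v i ^ 2) (fun i _ => pow2_ge_0 (v i))). nra. }
  assert (descent := damped_descent_bound (INR n) eps lam Lam (alpha * m)
            (Fobj n W alpha f x - Fobj n W alpha f xstar) (qform n A g)
            (rsum n (fun i => h i ^ 2)) (rsum n (fun i => g i ^ 2))
            (lt_0_INR n n_pos) eps_pos (conj lam_pos lam_le) ltac:(nra)
            ltac:(pose proof (xstar_min x); lra) eps_small h_sq (qform_Hhat_inv_Ddiag_ge x g)
            (Fobj_sub_le_grad_sq n W alpha m M f f1 f2 W_sym alpha_pos f_deriv f1_deriv
               f2_bounds W_nonneg W_stoch m_pos x xstar)).
  rewrite steps. unfold ann_rate. fold lam Lam. fold g in mean.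
  change (rsum n (fun i => g i * h i)) with (qform n A g) in mean.
  lra.
Qed.

End AsyncNewton.

Theorem theorem4p5 :
  forall (n : nat) (alpha delta Delta m M L eps : R)
         (W : nat -> nat -> R) (f f1 f2 : nat -> R -> R)
         (xstar x0 : nat -> R),
  (2 <= n)%nat ->
  0 < alpha ->
  0 < delta -> delta <= Delta -> Delta < 1 ->
  (forall i j, (i < n)%nat -> (j < n)%nat -> W i j = W j i) ->
  (forall i j, (i < n)%nat -> (j < n)%nat -> 0 <= W i j < 1) ->
  (forall i, (i < n)%nat -> rsum n (fun j => W i j) = 1) ->
  (forall v : nat -> R,
     (forall i, (i < n)%nat -> rsum n (fun j => (kron i j - W i j) * v j) = 0) ->
     forall i j, (i < n)%nat -> (j < n)%nat -> v i = v j) ->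
  (forall i, (i < n)%nat -> delta <= W i i <= Delta) ->
  (forall i s, (i < n)%nat -> derivable_pt_lim (f i) s (f1 i s)) ->
  (forall i s, (i < n)%nat -> derivable_pt_lim (f1 i) s (f2 i s)) ->
  (forall i, (i < n)%nat -> continuity (f2 i)) ->
  0 < m ->
  (forall i s, (i < n)%nat -> m <= f2 i s <= M) ->
  (forall i a b, (i < n)%nat -> Rabs (f2 i a - f2 i b) <= L * Rabs (a - b)) ->
  (forall y : nat -> R, Fobj n W alpha f xstar <= Fobj n W alpha f y) ->
  0 < eps -> eps < 1 ->
  eps < 2 * (lambda_c delta alpha M / Lambda_c delta Delta alpha m) ^ 2 ->
  let Fstar := Fobj n W alpha f xstar in
  let lam := lambda_c delta alpha M in
  let Lam := Lambda_c delta Delta alpha m in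
  let beta := alpha * m * eps * (2 * lam ^ 2 - eps * Lam ^ 2) / (INR n * lam) in
  (forall t : nat,
     expected_F n W alpha f f1 f2 eps x0 t - Fstar
       <= (1 - beta) ^ t * (Fobj n W alpha f x0 - Fstar))
  /\ 0 < beta < 1.
Proof.
  intros n alpha delta Delta m M L eps W f f1 f2 xstar x0 n_ge2 alpha_pos _ delta_le Delta_lt1
    W_sym W_range W_stoch _ W_diag f_deriv f1_deriv _ m_pos f2_bounds _ xstar_min eps_pos eps_lt1
    eps_small Fstar lam Lam beta.
  assert (n_pos : (0 < n)%nat) by lia.
  assert (W_nonneg : forall i j, (i < n)%nat -> (j < n)%nat -> 0 <= W i j)
    by (intros i j Hi Hj; apply W_range; assumption).
  assert (m_le : m <= M) by (destruct (f2_bounds 0%nat 0 n_pos); lra).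
  assert (eps_Lam : eps * Lam ^ 2 < 2 * lam ^ 2).
  { pose proof (lambda_c_pos alpha delta Delta m M alpha_pos m_pos m_le delta_le Delta_lt1)
      as lam_pos.
    pose proof (lambda_c_le_Lambda_c alpha delta Delta m M alpha_pos m_pos m_le delta_le Delta_lt1)
      as lam_le.
    fold lam Lam in lam_pos, lam_le, eps_small.
    replace (2 * lam ^ 2) with (2 * (lam / Lam) ^ 2 * Lam ^ 2) by (field; lra).
    apply Rmult_lt_compat_r; [nra | exact eps_small]. }
  assert (rate : 0 < beta < 1) by (now apply ann_rate_bounds).
  split; [|exact rate].
  intros t. apply expected_F_geometric; [exact n_pos | lra |].
  intros x. now apply (ann_step_contraction n alpha delta Delta m M eps W f f1 f2 xstar).
Qed.
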